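(* Let $X$ be a set and $f:X\to X$ a map. The functional Alexandroff topology on $X$ associated to $f$ is uniformizable if and only if $\mathrm{Per}(f)=X$.
   Context: For $a\in X$, $V_f(a):=\{x\in X:\exists n\ge0,\ f^n(x)=a\}$; the functional Alexandroff topology associated to $f$ is the topology on $X$ with basis $\{V_f(a):a\in X\}$. $\mathrm{Per}(f)=\{x\in X:\exists n\ge1,\ f^n(x)=x\}$. A topology is uniformizable if it is induced by some uniform structure on $X$. *)

From Stdlib Require Import Arith.

Set Implicit Arguments.

Definition iter_fun {X : Type} (f : X -> X) (n : nat) (x : X) : X := Nat.iter n f x.

Definition Vf {X : Type} (f : X -> X) (a : X) : X -> Prop :=
  fun x => exists n : nat, iter_fun f n x = a.

Definition Per {X : Type} (f : X -> X) : X -> Prop :=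
  fun x => exists n : nat, 1 <= n /\ iter_fun f n x = x.

(* Open sets of the topology generated by the basis {V_f(a) : a in X}:
   unions of basis elements. *)
Definition falex_open {X : Type} (f : X -> X) (U : X -> Prop) : Prop :=
  forall x, U x -> exists a, Vf f a x /\ (forall y, Vf f a y -> U y).

Definition is_uniformity {X : Type} (E : (X -> X -> Prop) -> Prop) : Prop :=
  E (fun _ _ => True) /\
  (forall U V, E U -> (forall x y, U x y -> V x y) -> E V) /\
  (forall U V, E U -> E V -> E (fun x y => U x y /\ V x y)) /\
  (forall U x, E U -> U x x) /\
  (forall U, E U -> E (fun x y => U y x)) /\
  (forall U, E U -> exists V, E V /\
       (forall x y z, V x y -> V y z -> U x z)).

Definition unif_open {X : Type} (E : (X -> X -> Prop) -> Prop) (A : X -> Prop) : Prop :=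
  forall x, A x -> exists U, E U /\ (forall y, U x y -> A y).

Definition uniformizable {X : Type} (is_open : (X -> Prop) -> Prop) : Prop :=
  exists E, is_uniformity E /\ (forall A, unif_open E A <-> is_open A).

(* The open sets of the functional Alexandroff topology are exactly the sets
   [A] with [f^-1(A) ⊆ A]; in particular every open set containing [f x]
   contains [x].  In a uniform space this specialization relation is
   symmetric, so every uniformly open set containing [x] contains [f x];
   applied to the open set [V_f(x)] this gives [f^m (f x) = x].  Conversely,
   if every point is periodic, "x is reached from y" is an equivalence
   relation, and the uniformity of all supersets of it induces exactly the
   sets closed under it, which are the Alexandroff open sets. *)
From Stdlib Require Import Arith Lia.

Set Implicit Arguments.

Lemma iter_fun_add {X : Type} (f : X -> X) (n m : nat) (x : X) :
  iter_fun f (n + m) x = iter_fun f n (iter_fun f m x).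
Proof. apply Nat.iter_add. Qed.

Lemma iter_fun_mul_period {X : Type} (f : X -> X) (p k : nat) (x : X) :
  iter_fun f p x = x -> iter_fun f (k * p) x = x.
Proof.
  intros Hp; induction k as [|k IHk]; [reflexivity|].
  simpl; rewrite iter_fun_add, IHk; exact Hp.
Qed.

Lemma Vf_refl {X : Type} (f : X -> X) (a : X) : Vf f a a.
Proof. exists 0; reflexivity. Qed.

Lemma Vf_trans {X : Type} (f : X -> X) (a x y : X) :
  Vf f a x -> Vf f x y -> Vf f a y.
Proof.
  intros [n Hn] [m Hm]; exists (n + m).
  rewrite iter_fun_add, Hm; exact Hn.
Qed.

Lemma Vf_sym {X : Type} (f : X -> X) (x y : X) :
  Per f y -> Vf f x y -> Vf f y x.
Proof.
  intros [p [Hp1 Hp]] [n Hn]; exists (n * p - n).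
  rewrite <- Hn, <- iter_fun_add.
  replace (n * p - n + n) with (n * p) by nia.
  apply iter_fun_mul_period; exact Hp.
Qed.

Lemma Per_of_Vf_f {X : Type} (f : X -> X) (x : X) : Vf f x (f x) -> Per f x.
Proof.
  intros [m Hm]; exists (S m); split; [lia|].
  unfold iter_fun; rewrite Nat.iter_succ_r; exact Hm.
Qed.

Lemma falex_openE {X : Type} (f : X -> X) (A : X -> Prop) :
  falex_open f A <-> (forall x y, A x -> Vf f x y -> A y).
Proof.
  split.
  - intros HA x y Ax Hxy.
    destruct (HA x Ax) as [a [Hax HaA]].
    exact (HaA y (Vf_trans Hax Hxy)).
  - intros HA x Ax; exists x; split; [apply Vf_refl|].
    intros y; exact (HA x y Ax).
Qed.

Lemma falex_open_preimage {X : Type} (f : X -> X) (A : X -> Prop) (x : X) :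
  falex_open f A -> A (f x) -> A x.
Proof.
  intros HA Afx; apply (proj1 (falex_openE f A) HA (f x)); [exact Afx|].
  exists 1; reflexivity.
Qed.

Lemma falex_open_Vf {X : Type} (f : X -> X) (a : X) : falex_open f (Vf f a).
Proof. apply falex_openE; intros x y; apply Vf_trans. Qed.

Section UniformTopology.

Variable X : Type.
Variable E : (X -> X -> Prop) -> Prop.
Hypothesis HE : is_uniformity E.

Lemma unif_open_interior (S : X -> Prop) :
  unif_open E (fun w => exists W, E W /\ forall v, W w v -> S v).
Proof.
  destruct HE as (_ & _ & _ & _ & _ & Hsq).
  intros z [W [HW HWS]].
  destruct (Hsq W HW) as [V [HV HVV]].
  exists V; split; [exact HV|].
  intros w Hzw; exists V; split; [exact HV|].
  intros v Hwv; apply HWS; exact (HVV z w v Hzw Hwv).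
Qed.

Lemma entourage_of_specialization (x y : X) :
  (forall A, unif_open E A -> A y -> A x) ->
  forall U, E U -> U x y.
Proof.
  intros Hspec U HU.
  destruct HE as (_ & _ & _ & Hdiag & Hsym & _).
  (* the uniform interior of the ball [{v | U v y}] is an open set containing [y] *)
  destruct (Hspec _ (unif_open_interior (fun v => U v y))) as [W [HW HWx]].
  - exists (fun a b => U b a); split; [exact (Hsym U HU)|]; auto.
  - exact (HWx x (Hdiag W x HW)).
Qed.

Lemma unif_open_specialization_sym (x y : X) :
  (forall A, unif_open E A -> A y -> A x) ->
  forall A, unif_open E A -> A x -> A y.
Proof.
  intros Hspec A HA Ax.
  destruct (HA x Ax) as [U [HU HUA]].
  exact (HUA y (entourage_of_specialization Hspec HU)).
Qed.

End UniformTopology.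

Definition principal_entourages {X : Type} (R : X -> X -> Prop)
  (U : X -> X -> Prop) : Prop :=
  forall x y, R x y -> U x y.

Section PrincipalUniformity.

Variable X : Type.
Variable R : X -> X -> Prop.

Lemma unif_open_principal (A : X -> Prop) :
  unif_open (principal_entourages R) A <-> (forall x y, A x -> R x y -> A y).
Proof.
  split.
  - intros HA x y Ax Rxy.
    destruct (HA x Ax) as [U [HU HUA]].
    exact (HUA y (HU x y Rxy)).
  - intros HA x Ax; exists R; split; [intros ? ? H; exact H|].
    intros y; exact (HA x y Ax).
Qed.

Hypothesis R_refl : forall x, R x x.
Hypothesis R_sym : forall x y, R x y -> R y x.
Hypothesis R_trans : forall x y z, R x y -> R y z -> R x z.

Lemma principal_is_uniformity : is_uniformity (principal_entourages R).
Proof.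
  unfold principal_entourages; repeat split; auto.
  intros U HU; exists R; split; [auto|].
  intros x y z Rxy Ryz; exact (HU x z (R_trans Rxy Ryz)).
Qed.

End PrincipalUniformity.

Theorem mainTheorem9 (X : Type) (f : X -> X) :
  uniformizable (falex_open f) <-> (forall x : X, Per f x).
Proof.
  split.
  - intros [E [HE Hopen]] x.
    apply Per_of_Vf_f.
    assert (Hspec : forall A, unif_open E A -> A (f x) -> A x).
    { intros A HA; apply falex_open_preimage, Hopen, HA. }
    apply (unif_open_specialization_sym HE Hspec (A := Vf f x)).
    + apply Hopen, falex_open_Vf.
    + apply Vf_refl.
  - intros Hper.
    exists (principal_entourages (Vf f)); split.
    + apply principal_is_uniformity.
      * apply Vf_refl.
      * intros x y; apply Vf_sym, Hper.
      * intros x y z; apply Vf_trans.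
    + intros A; rewrite unif_open_principal, falex_openE; reflexivity.
Qed.
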